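(* Let $n$ be an integer with $1\le n\le d'-2$ and let $\{h_i\}_{i=0}^{n+1}$ be a sequence in $\mathbb F$ such that (i) $h_{i+2}-h_{i-1}=(q^2+1+q^{-2})(h_{i+1}-h_i)$ for all $i=1,2,\dots,n-1$, and (ii) there are integers $0\le j<k<\ell\le n+1$ with $h_j=h_k=h_\ell=0$. Then $h_i=0$ for all $i=0,1,\dots,n+1$.
   Context: $\mathbb F$ is an algebraically closed field and $q\in\mathbb F^\times$ is a root of unity of order $d\notin\{1,2,4\}$; $d'=d$ if $d$ is odd and $d'=d/2$ if $d$ is even (the order of $q^2$). *)

From HB Require Import structures.
From mathcomp Require Import all_boot all_order all_algebra.
Set Implicit Arguments. Unset Strict Implicit. Unset Printing Implicit Defensive.
Import GRing.Theory.

(* d' : the order of q^2 when q has order d: d if d is odd, d/2 if d is even *)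
Definition dprime (d : nat) : nat := if odd d then d else d./2.

(* Put r := q^2.  The characteristic polynomial of the recurrence (i) is
   (x - 1)(x - r)(x - r^-1), so h_i = r^-i p(r^i) for a polynomial p of degree
   at most 2.  Since q^2 has order d' > n + 1, the points r^j, r^k, r^l are
   distinct roots of p, hence p = 0. *)

From HB Require Import structures.
From mathcomp Require Import all_boot all_order all_algebra.
From mathcomp Require Import ring zify.
Set Implicit Arguments.
Unset Strict Implicit.
Unset Printing Implicit Defensive.
Import GRing.Theory.
Local Open Scope ring_scope.

Lemma dprime_prim_root (R : nzRingType) (d : nat) (q : R) :
  d.-primitive_root q -> (dprime d).-primitive_root (q ^+ 2).
Proof.
move=> q_prim; suff <- : (d %/ gcdn 2 d)%N = dprime d by exact: exp_prim_root.
rewrite /dprime; case: ifP => d_odd.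
- have /eqP -> : coprime 2 d by rewrite prime_coprime // dvdn2 d_odd.
  exact: divn1.
- by rewrite (gcdn_idPl _) ?divn2 // dvdn2 d_odd.
Qed.

Lemma prim_expr_inj (R : nzRingType) (n : nat) (z : R) :
  n.-primitive_root z -> {in gtn n &, injective (fun i => z ^+ i)}.
Proof.
move=> z_prim i j; rewrite !inE => lt_i lt_j /eqP.
by rewrite (eq_prim_root_expr z_prim) !modn_small // => /eqP.
Qed.

Lemma interpolate3 (F : fieldType) (x0 x1 x2 y0 y1 y2 : F) :
  uniq [:: x0; x1; x2] ->
  exists2 p : {poly F}, (size p <= 3)%N &
    [/\ p.[x0] = y0, p.[x1] = y1 & p.[x2] = y2].
Proof.
rewrite /= !inE andbT negb_or => /andP[/andP[ne01 ne02] ne12].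
(* Newton's divided differences, expanded in the monomial basis *)
pose d1 := (y1 - y0) / (x1 - x0).
pose d2 := ((y2 - y0) / (x2 - x0) - d1) / (x2 - x1).
pose c := [:: y0 - d1 * x0 + d2 * x0 * x1; d1 - d2 * (x0 + x1); d2].
exists (\poly_(i < 3) c`_i); first exact: size_poly.
rewrite !horner_poly !big_ord_recr !big_ord0 /= !add0r !expr0 !expr1 !mulr1 /d2 /d1.
have ne (u v : F) : u != v -> u - v != 0 by rewrite subr_eq0.
by split; field; rewrite ?ne // eq_sym.
Qed.

Definition solves_recurrence (R : pzRingType) (c : R) (N : nat) (h : nat -> R) :=
  forall m : nat, (m.+3 <= N)%N -> h m.+3 - h m = c * (h m.+2 - h m.+1).

Lemma solves_recurrence_eq (R : pzRingType) (c : R) (N : nat) (g h : nat -> R) :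
  solves_recurrence c N g -> solves_recurrence c N h ->
  g 0%N = h 0%N -> g 1%N = h 1%N -> g 2%N = h 2%N ->
  forall i, (i <= N)%N -> g i = h i.
Proof.
move=> rec_g rec_h g0 g1 g2; elim/ltn_ind => -[|[|[|m]]] // IH le_mN.
have /eqP := rec_g m le_mN; have /eqP := rec_h m le_mN.
rewrite !subr_eq => /eqP -> /eqP ->.
by rewrite !IH //; lia.
Qed.

Lemma geometric_solves_recurrence (F : fieldType) (r : F) (N : nat) (p : {poly F}) :
  r != 0 -> (size p <= 3)%N ->
  solves_recurrence (r + 1 + r^-1) N (fun i => p.[r ^+ i] / r ^+ i).
Proof.
move=> r_neq0 size_p m _ /=.
rewrite !(horner_coef_wide _ size_p) !big_ord_recr !big_ord0 /= !add0r !exprS.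
have : r ^+ m != 0 by rewrite expf_neq0.
by move: (r ^+ m) => u u_neq0; field; rewrite r_neq0 u_neq0.
Qed.

Lemma solves_recurrence_is_geometric (F : fieldType) (r : F) (N : nat) (h : nat -> F) :
  r != 0 -> uniq [:: 1; r; r ^+ 2] -> solves_recurrence (r + 1 + r^-1) N h ->
  exists2 p : {poly F}, (size p <= 3)%N &
    forall i, (i <= N)%N -> h i = p.[r ^+ i] / r ^+ i.
Proof.
move=> r_neq0 uniq_r rec_h.
have [p size_p [p0 p1 p2]] := interpolate3 (h 0%N) (r * h 1%N) (r ^+ 2 * h 2%N) uniq_r.
exists p => //; apply: (solves_recurrence_eq rec_h).
- exact: geometric_solves_recurrence.
- by rewrite expr0 p0 divr1.
- by rewrite expr1 p1 mulrC mulKf.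
- by rewrite p2 mulrC mulKf // expf_neq0.
Qed.

Lemma solves_recurrence_eq0 (F : fieldType) (r : F) (N : nat) (h : nat -> F)
    (j k l : nat) :
  (2 <= N)%N -> {in gtn N.+1 &, injective (fun i => r ^+ i)} ->
  solves_recurrence (r + 1 + r^-1) N h ->
  (j < k < l)%N -> (l <= N)%N -> h j = 0 -> h k = 0 -> h l = 0 ->
  forall i, (i <= N)%N -> h i = 0.
Proof.
move=> le2N r_inj rec_h /andP[lt_jk lt_kl] le_lN hj0 hk0 hl0.
have uniq_pow s : all (gtn N.+1) s -> uniq s -> uniq [seq r ^+ i | i <- s].
  move=> /allP s_le; rewrite map_inj_in_uniq // => i i' /s_le s_i /s_le s_i'.
  exact: r_inj.
have r_neq0 : r != 0.
  apply/eqP => r0; suff : 1%N = 2%N by [].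
  by apply: r_inj; rewrite ?inE ?r0 ?expr0n //; lia.
have [|p size_p h_p] := solves_recurrence_is_geometric r_neq0 _ rec_h.
  by have := uniq_pow [:: 0; 1; 2]%N; rewrite /= expr0 expr1; apply; lia.
have root_p i : (i <= N)%N -> h i = 0 -> root p (r ^+ i).
  move=> le_iN; rewrite rootE h_p // => /eqP.
  by rewrite mulf_eq0 invr_eq0 expf_eq0 (negbTE r_neq0) andbF orbF.
have p_eq0 : p = 0.
  apply: (@roots_geq_poly_eq0 _ _ [seq r ^+ i | i <- [:: j; k; l]]) => //.
  - by rewrite /= !root_p //; lia.
  - by apply: uniq_pow => /=; rewrite ?inE; lia.
by move=> i le_iN; rewrite h_p // p_eq0 horner0 mul0r.
Qed.

Theorem lemma4p2 (F : closedFieldType) (q : F) (d : nat)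
  (hq : d.-primitive_root q) (hd : (d \notin [:: 1%N; 2%N; 4%N]))
  (n : nat) (hn1 : (1 <= n)%N) (hn2 : (n + 2 <= dprime d)%N)
  (h : nat -> F)
  (hrec : forall i : nat, (1 <= i)%N -> (i <= n.-1)%N ->
     h i.+2 - h i.-1 = (q ^+ 2 + 1 + q ^- 2) * (h i.+1 - h i))
  (hzero : exists j k l : nat,
     [/\ (j < k)%N, (k < l)%N, (l <= n.+1)%N & [/\ h j = 0, h k = 0 & h l = 0]]) :
  forall i : nat, (i <= n.+1)%N -> h i = 0.
Proof.
have [j [k [l [lt_jk lt_kl le_l [hj0 hk0 hl0]]]]] := hzero.
apply: (solves_recurrence_eq0 (r := q ^+ 2) _ _ _ _ le_l hj0 hk0 hl0).
- by lia.
- apply: sub_in2 (prim_expr_inj (dprime_prim_root hq)) => i.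
  by rewrite !inE => lt_i; lia.
- by move=> m le_m; apply: (hrec m.+1); lia.
- by rewrite lt_jk.
Qed.
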